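(* Let $\mathrm{f}$ be a chief factor function, $G$ a finite group, $K\trianglelefteq G$, and $H/T$ a non-abelian chief factor of $G$ with $K\le T$. Define $Z_1,Z_2$ by $Z_1/K=\mathrm{Z}(G/K,\mathrm{f})\cap T/K$ and $Z_2/K=\mathrm{Z}(G/K,\mathrm{f})\cap H/K$. If $\mathrm{f}(H/T,G)=0$ then $Z_2=Z_1$. If $\mathrm{f}(H/T,G)=1$, let $C$ be the subgroup with $Z_1\le C$ and $C/Z_1=\big(C_{H/Z_1}(T/Z_1)\big)^{\mathfrak{S}}$. Then $Z_2\ne Z_1$ if and only if $|C/Z_1|=|H/T|$, and in that case $Z_2=C$.
   Context: A chief factor function is a function $\mathrm{f}$ assigning $0$ or $1$ to every pair $(H/K,G)$ with $G$ a finite group and $H/K$ a chief factor of $G$, such that: (1) $\mathrm{f}(H/K,G)=\mathrm{f}(M/N,G)$ whenever $H/K$ and $M/N$ are $G$-isomorphic chief factors of $G$; (2) $\mathrm{f}(H/K,G)=\mathrm{f}((H/N)/(K/N),G/N)$ for every $N\trianglelefteq G$ with $N\le K$. $\mathrm{Z}(G,\mathrm{f})$ denotes the greatest normal subgroup of $G$ such that $\mathrm{f}(H/K,G)=1$ for every chief factor $H/K$ of $G$ with $H\le \mathrm{Z}(G,\mathrm{f})$. For a group $X$, $X^{\mathfrak{S}}$ is the soluble residual, i.e. the smallest normal subgroup of $X$ with soluble quotient. *)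

From HB Require Import structures.
From mathcomp Require Import all_boot all_fingroup all_solvable.
Set Implicit Arguments. Unset Strict Implicit. Unset Printing Implicit Defensive.
Local Open Scope group_scope.

(* A candidate chief factor function: [f gT G H K] is the value f(H/K, G).
   It is only meaningful when [chief_factor G K H] holds. *)
Definition cf_fun := forall gT : finGroupType, {set gT} -> {set gT} -> {set gT} -> bool.

Definition G_iso (gT : finGroupType) (G H K M N : {group gT}) : Prop :=
  exists phi : {morphism H / K >-> coset_of N},
    isom (H / K) (M / N) phi /\
    (forall g, g \in G -> forall x, x \in H / K ->
        phi (x ^ coset K g) = (phi x) ^ coset N g).

Definition is_chief_factor_function (f : cf_fun) : Prop :=
  (forall (gT : finGroupType) (G H K M N : {group gT}),
      chief_factor G K H -> chief_factor G N M -> G_iso G H K M N ->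
      f gT G H K = f gT G M N)
  /\
  (forall (gT : finGroupType) (G H K N : {group gT}),
      chief_factor G K H -> N <| G -> N \subset K ->
      f gT G H K = f (coset_of N) (G / N) (H / N) (K / N)).

Definition f_good (f : cf_fun) (gT : finGroupType) (G N : {set gT}) : bool :=
  [forall U : {group gT}, forall V : {group gT},
     (chief_factor G V U && (U \subset N)) ==> f gT G U V].

(* Z(G, f): the greatest normal subgroup of G all of whose chief factors
   below it have f-value 1; realised as the subgroup generated by all such
   normal subgroups (which is itself such a subgroup for a chief factor
   function, so it is the greatest one). *)
Definition Zf (f : cf_fun) (gT : finGroupType) (G : {set gT}) : {set gT} :=
  <<\bigcup_(N : {group gT} | (N <| G) && f_good f G N) (N : {set gT})>>.

Definition sol_residual (gT : finGroupType) (X : {set gT}) : {set gT} :=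
  \bigcap_(N : {group gT} | (N <| X) && solvable (X / N)) (N : {set gT}).

From HB Require Import structures.
From mathcomp Require Import all_boot all_fingroup all_solvable.
Set Implicit Arguments. Unset Strict Implicit. Unset Printing Implicit Defensive.
Local Open Scope group_scope.

(* Let Z be the preimage of Z(G/K, f), so that Z1 = Z :&: T and Z2 = Z :&: H.
   The normal subgroup (Z :&: H) T lies between T and H, so either Z2 = Z1 or
   (Z :&: H) T = H; in the latter case Z2/Z1 is a chief factor G-isomorphic to
   H/T, hence of f-value 1 since it lies below Z.  It is then perfect, it
   centralises T/Z1, and C_(H/Z1)(T/Z1) is its product with the abelian group
   T/Z1 :&: C_(H/Z1)(T/Z1); so Z2/Z1 is the soluble residual of that
   centraliser.  Conversely, if this residual R has order |H/T|, its preimage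
   C is a normal supplement of T in H with C :&: T = Z1.  Then C/Z1 is
   G-isomorphic to H/T, so when f(H/T) = 1 the group C is again f-hypercentral
   above K, hence C <= Z :&: H, which rules out Z2 = Z1. *)

Section ChiefFactors.
Variable gT : finGroupType.
Implicit Types G U V N A B X Y : {group gT}.

Lemma chief_factorP G V U :
  reflect [/\ U <| G, V <| G, V \proper U &
           forall N, N <| G -> V \subset N -> N \proper U -> N :=: V]
          (chief_factor G V U).
Proof.
apply: (iffP idP) => [|[nsUG nsVG pVU maxV]].
  case/andP=> /maxgroupP[/andP[pVU nVG] maxV] nsUG; split=> //.
    by rewrite /normal nVG (subset_trans (proper_sub pVU) (normal_sub nsUG)).
  by move=> N nsNG sVN pNU; rewrite (maxV N) // pNU normal_norm.
apply/andP; split=> //; apply/maxgroupP; split; first by rewrite pVU normal_norm.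
move=> N /andP[pNU nNG] sVN; apply: (maxV N) => //.
by rewrite /normal nNG (subset_trans (proper_sub pNU) (normal_sub nsUG)).
Qed.

Lemma chief_factor_between G V U N :
  chief_factor G V U -> N <| G -> V \subset N -> N \subset U -> N :=: V \/ N :=: U.
Proof.
case/chief_factorP=> _ _ _ maxV nsNG sVN sNU.
have [pNU | ] := boolP (N \proper U); first by left; apply: maxV.
by rewrite properEneq sNU andbT negbK => /eqP; right.
Qed.

Lemma normal_joinE G A B : A <| G -> B <| G -> A <*> B = A * B.
Proof.
move=> nsAG nsBG; apply: norm_joinEr.
exact: subset_trans (normal_sub nsBG) (normal_norm nsAG).
Qed.

Lemma chief_factor_diamond G X' Y X : X' <| G -> Y <| G -> X' * Y = X ->
  chief_factor G Y X <-> chief_factor G (X' :&: Y) X'.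
Proof.
move=> nsX'G nsYG defX.
have sX'X : X' \subset X by rewrite -defX mulG_subl.
have sYX : Y \subset X by rewrite -defX mulG_subr.
split=> [chYX | chIX'].
  have /chief_factorP[nsXG _ pYX _] := chYX.
  apply/chief_factorP; split; rewrite ?normalI //.
    rewrite properEneq subsetIl andbT /=; apply: contraTneq pYX => eIX'.
    by rewrite properE -defX mulG_subG subxx -eIX' subsetIr andbF.
  move=> N nsNG sIN pNX'; have sNX' := proper_sub pNX'.
  have sNYX : N <*> Y \subset X by rewrite join_subG sYX (subset_trans sNX').
  have [eNY | eNY] := chief_factor_between chYX (normalY nsNG nsYG)
                        (joing_subr _ _) sNYX.
    apply/eqP; rewrite eqEsubset sIN subsetI sNX' /=.
    by rewrite (subset_trans (joing_subl N Y)) ?eNY.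
  have eNX' : N * (Y :&: X') = X'.
    by rewrite group_modl // -(normal_joinE nsNG nsYG) eNY (setIidPr sX'X).
  rewrite mulGSid in eNX'; last by rewrite /= setIC.
  by move: pNX'; rewrite eNX' properxx.
have /chief_factorP[_ _ pIX' _] := chIX'.
apply/chief_factorP; split=> //; first by rewrite -defX normalM.
  rewrite properEneq sYX andbT; apply: contraTneq pIX' => eYX.
  by rewrite properE subsetI subxx eYX sX'X andbF.
move=> N nsNG sYN pNX.
have sIN : X' :&: Y \subset N :&: X' by rewrite setIC setSI.
have [eNX' | eNX'] :=
  chief_factor_between chIX' (normalI nsNG nsX'G) sIN (subsetIr _ _).
  by rewrite -(setIidPl (proper_sub pNX)) -defX -group_modr // eNX' mulSGid ?subsetIr.
by move: pNX; rewrite -defX properE mulG_subG -eNX' subsetIl sYN andbF.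
Qed.

Lemma G_iso_diamond G X' Y X : X' <| G -> Y <| G -> X' * Y = X ->
  G_iso G X' (X' :&: Y) X Y.
Proof.
move=> nsX'G nsYG defX.
have -> : (X' :&: Y)%G = (Y :&: X')%G by apply: group_inj; rewrite /= setIC.
have nYX' : X' \subset 'N(Y) := subset_trans (normal_sub nsX'G) (normal_norm nsYG).
have nsIG : (Y :&: X')%G <| G := normalI nsYG nsX'G.
have nIX' : X' \subset 'N(Y :&: X') :=
  subset_trans (normal_sub nsX'G) (normal_norm nsIG).
have [phi injphi phiE] := second_isom nYX'.
have phi_coset x : x \in X' -> phi (coset (Y :&: X') x) = coset Y x.
  move=> X'x; have := phiE _ (_ : [set x] \subset X'); rewrite sub1set X'x.
  rewrite !quotient_set1 ?(subsetP nIX') ?(subsetP nYX') // morphim_set1.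
    by move/(_ isT)/set1_inj.
  by rewrite mem_quotient.
exists phi; split.
  by apply/isomP; split=> //; rewrite phiE //= -defX quotientMidr.
move=> g Gg _ /morphimP[x Nx X'x ->].
have NYg : g \in 'N(Y) := subsetP (normal_norm nsYG) g Gg.
have NIg : g \in 'N(Y :&: X') := subsetP (normal_norm nsIG) g Gg.
have X'xg : x ^ g \in X' by rewrite memJ_norm ?(subsetP (normal_norm nsX'G)).
by rewrite -morphJ //= !phi_coset // morphJ // (subsetP nYX').
Qed.

Lemma chief_factor_perfect G V U : chief_factor G V U -> ~~ abelian (U / V) ->
  (U / V)^`(1) = U / V.
Proof.
move=> chVU nabUV; have /chief_factorP[nsUG nsVG pVU _] := chVU.
have nVU : U \subset 'N(V) := subset_trans (normal_sub nsUG) (normal_norm nsVG).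
have nsU'G : (U^`(1))%G <| G := char_normal_trans (der_char 1 U) nsUG.
have sU'VU : U^`(1) <*> V \subset U by rewrite join_subG der_sub proper_sub.
have [eU'V | eU'V] :=
  chief_factor_between chVU (normalY nsU'G nsVG) (joing_subr _ _) sU'VU.
  by case/negP: nabUV; apply: sub_der1_abelian; rewrite -eU'V joing_subl.
by rewrite -quotient_der // -quotientMidr -(normal_joinE nsU'G nsVG) eU'V.
Qed.

End ChiefFactors.

Section ChiefFactorQuotients.
Variable gT : finGroupType.
Implicit Types G K U V : {group gT}.

Lemma chief_factor_cosetpre K G (U V : {group coset_of K}) : K <| G ->
  chief_factor (G / K) V U = chief_factor G (coset K @*^-1 V) (coset K @*^-1 U).
Proof.
move=> nsKG; have defG := quotientGK nsKG.
apply/idP/idP.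
  case/(chief_factorP (G / K)%G)=> nsUG nsVG pVU maxV.
  apply/(chief_factorP G (coset K @*^-1 V)%G (coset K @*^-1 U)%G).
  split; [by rewrite -defG cosetpre_normal.. | by rewrite cosetpre_proper |].
  move=> N nsNG sVN pNU; have sKN := subset_trans (sub_cosetpre V) sVN.
  have defN := quotientGK (normalS sKN (normal_sub nsNG) nsKG).
  rewrite -defN cosetpreSK in sVN; rewrite -defN cosetpre_proper in pNU.
  by rewrite -defN (maxV _ (quotient_normal K nsNG) sVN pNU).
case/(chief_factorP G (coset K @*^-1 V)%G (coset K @*^-1 U)%G)=> nsUG nsVG pVU maxV.
apply/(chief_factorP (G / K)%G).
split; [by rewrite -cosetpre_normal defG.. | by rewrite -cosetpre_proper |].
move=> N nsNG sVN pNU.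
have nsNG' : (coset K @*^-1 N)%G <| G by rewrite /= -defG cosetpre_normal.
have := maxV _ nsNG'; rewrite /= cosetpreSK cosetpre_proper => /(_ sVN pNU) eN.
by rewrite -(cosetpreK N) eN cosetpreK.
Qed.

Lemma chief_factor_quotient K G U V : K <| G -> K \subset V ->
  chief_factor G V U -> chief_factor (G / K) (V / K) (U / K).
Proof.
move=> nsKG sKV chVU; have /chief_factorP[nsUG nsVG pVU _] := chVU.
have sKU := subset_trans sKV (proper_sub pVU).
rewrite chief_factor_cosetpre //= !quotientGK //.
  exact: normalS sKU (normal_sub nsUG) nsKG.
exact: normalS sKV (normal_sub nsVG) nsKG.
Qed.

End ChiefFactorQuotients.

Definition f_hypercentral (f : cf_fun) (gT : finGroupType) (G K N : {set gT}) :=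
  forall U V : {group gT},
    chief_factor G V U -> K \subset V -> U \subset N -> f gT G U V.

Section ChiefFactorFunction.
Variables (f : cf_fun) (gT : finGroupType).
Arguments f : clear implicits.
Hypothesis hf : is_chief_factor_function f.
Implicit Types G K U V N M A B X Y : {group gT}.

Lemma f_diamond G X' Y X : X' <| G -> Y <| G -> X' * Y = X ->
  chief_factor G Y X -> f gT G X' (X' :&: Y) = f gT G X Y.
Proof.
move=> nsX'G nsYG defX chYX.
apply: (hf.1 _ _ _ _ _ _ _ chYX (G_iso_diamond nsX'G nsYG defX)).
exact/(chief_factor_diamond nsX'G nsYG defX).
Qed.

Lemma chief_factor_meet G X Y A : chief_factor G Y X -> A <| G ->
  X \subset A * Y ->
  chief_factor G (Y :&: A) (X :&: A) /\ f gT G (X :&: A) (Y :&: A) = f gT G X Y.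
Proof.
move=> chYX nsAG sXAY; have /chief_factorP[nsXG nsYG pYX _] := chYX.
have nsXAG : (X :&: A)%G <| G := normalI nsXG nsAG.
have defX : (X :&: A) * Y = X by rewrite group_modr ?(setIidPl sXAY) ?proper_sub.
have eI : X :&: A :&: Y = Y :&: A by rewrite setIAC (setIidPr (proper_sub pYX)).
split; last by have := f_diamond nsXAG nsYG defX chYX; rewrite /= eI.
by have := chief_factor_diamond nsXAG nsYG defX; rewrite /= eI => /iffLR; apply.
Qed.

Lemma chief_factor_join G X Y A : chief_factor G Y X -> A <| G ->
  ~~ (X \subset A * Y) ->
  chief_factor G (Y <*> A) (X <*> A) /\ f gT G (X <*> A) (Y <*> A) = f gT G X Y.
Proof.
move=> chYX nsAG sXAY; have /chief_factorP[nsXG nsYG pYX _] := chYX.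
have sYX := proper_sub pYX.
have nsYAG : (Y <*> A)%G <| G := normalY nsYG nsAG.
have defXA : X * (Y <*> A) = X <*> A.
  by rewrite (normal_joinE nsYG nsAG) (normal_joinE nsXG nsAG) mulgA (mulGSid sYX).
have eI : X :&: (Y <*> A) = Y.
  have sYI : Y \subset X :&: (Y <*> A) by rewrite subsetI sYX joing_subl.
  have [// | eIX] := chief_factor_between chYX (normalI nsXG nsYAG) sYI (subsetIl _ _).
  case/negP: sXAY; rewrite -(normC (subset_trans (normal_sub nsYG) (normal_norm nsAG))).
  by rewrite -(normal_joinE nsYG nsAG) -{1}eIX subsetIr.
have := chief_factor_diamond nsXG nsYAG defXA; rewrite /= eI => chYXA.
split; first exact/chYXA.
by rewrite -(f_diamond nsXG nsYAG defXA) /= ?eI //; apply/chYXA.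
Qed.

Lemma f_hypercentral_join G K A B : A <| G -> B <| G ->
    K \subset A -> K \subset B ->
    f_hypercentral f G K A -> f_hypercentral f G K B ->
  f_hypercentral f G K (A <*> B).
Proof.
move=> nsAG nsBG sKA sKB hypA hypB U V chVU sKV sUAB.
have /chief_factorP[nsUG nsVG _ _] := chVU.
have [sUAV | nsUAV] := boolP (U \subset A * V).
  have [chI <-] := chief_factor_meet chVU nsAG sUAV.
  by apply: hypA chI _ (subsetIr _ _); rewrite subsetI sKV.
have [chJ <-] := chief_factor_join chVU nsAG nsUAV.
have sUABV : U <*> A \subset B * (V <*> A).
  apply: subset_trans (_ : A <*> B \subset _).
    by rewrite join_subG sUAB joing_subl.
  rewrite (normal_joinE nsAG nsBG) normC ?mulgS ?joing_subr //.
  exact: subset_trans (normal_sub nsAG) (normal_norm nsBG).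
have [chI <-] := chief_factor_meet chJ nsBG sUABV.
by apply: hypB chI _ (subsetIr _ _); rewrite subsetI (subset_trans sKV) ?joing_subl.
Qed.

Lemma f_hypercentral_chief_ext G K M N : chief_factor G M N -> f gT G N M ->
  K \subset M -> f_hypercentral f G K M -> f_hypercentral f G K N.
Proof.
move=> chMN fNM sKM hypM U V chVU sKV sUN.
have /chief_factorP[nsNG nsMG pMN _] := chMN.
have /chief_factorP[nsUG nsVG pVU _] := chVU.
have [sUMV | nsUMV] := boolP (U \subset M * V).
  have [chI <-] := chief_factor_meet chVU nsMG sUMV.
  by apply: hypM chI _ (subsetIr _ _); rewrite subsetI sKV.
have [chJ <-] := chief_factor_join chVU nsMG nsUMV.
have /chief_factorP[_ _ pVMUM _] := chJ.
have sUMN : U <*> M \subset N by rewrite join_subG sUN proper_sub.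
have pVMN := proper_sub_trans pVMUM sUMN.
have [eVM | eVM] := chief_factor_between chMN (normalY nsVG nsMG)
                      (joing_subr _ _) (proper_sub pVMN); last first.
  by move: pVMN; rewrite eVM properxx.
have [eUM | eUM] := chief_factor_between chMN (normalY nsUG nsMG)
                      (joing_subr _ _) sUMN.
  by move: pVMUM; rewrite eUM eVM properxx.
by rewrite eUM eVM.
Qed.

Lemma f_goodP G N : reflect (f_hypercentral f G 1 N) (f_good f G N).
Proof.
apply: (iffP forallP) => [good U V chVU _ sUN | hypN U].
  by have /forallP/(_ V)/implyP := good U; apply; rewrite chVU sUN.
by apply/forallP=> V; apply/implyP=> /andP[chVU sUN]; apply: hypN; rewrite ?sub1G.
Qed.

Lemma Zf_normal_hypercentral G :
  exists N : {group gT}, [/\ Zf f G = N, N <| G & f_hypercentral f G 1 N].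
Proof.
pose S := \bigcup_(N : {group gT} | (N <| G) && f_good f G N) (N : {set gT}).
have [M /and3P[nsMG goodM sSM]] :
    exists M : {group gT}, [&& M <| G, f_good f G M & S \subset M].
  rewrite {}/S; elim/big_rec: _ => [|N S /andP[nsNG goodN]].
    exists 1%G; rewrite normal1 sub0set andbT; apply/f_goodP=> U V chVU _ sU1.
    have /chief_factorP[_ _ pVU _] := chVU.
    by move: pVU; rewrite (trivgP sU1) properE sub1G andbF.
  case=> M /and3P[nsMG goodM sSM]; exists (N <*> M)%G; rewrite normalY //=.
  rewrite subUset joing_subl (subset_trans sSM) ?joing_subr // !andbT.
  by apply/f_goodP/f_hypercentral_join; rewrite ?sub1G //; apply/f_goodP.
exists M; split=> //; last exact/f_goodP.
by apply/eqP; rewrite eqEsubset gen_subG sSM sub_gen // (bigcup_sup M) ?nsMG.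
Qed.

Lemma Zf_max G N : N <| G -> f_hypercentral f G 1 N -> N \subset Zf f G.
Proof. by move=> nsNG /f_goodP goodN; rewrite sub_gen // (bigcup_sup N) ?nsNG. Qed.

End ChiefFactorFunction.

Section RelativeHypercentre.
Variables (f : cf_fun) (gT : finGroupType).
Arguments f : clear implicits.
Hypothesis hf : is_chief_factor_function f.

Lemma cosetpre_Zf_greatest (G K : {group gT}) : K <| G ->
  exists Z : {group gT},
    [/\ coset K @*^-1 Zf f (G / K) = Z, Z <| G, K \subset Z,
        f_hypercentral f G K Z &
        forall N : {group gT}, N <| G -> K \subset N ->
          f_hypercentral f G K N -> N \subset Z].
Proof.
move=> nsKG; have [N [eZf nsNG hypN]] := Zf_normal_hypercentral hf (G / K)%G.
have nsK (X : {group gT}) : X <| G -> K \subset X -> K <| X.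
  by move=> nsXG sKX; apply: normalS sKX (normal_sub nsXG) nsKG.
exists (coset K @*^-1 N)%G; split; rewrite ?eZf ?sub_cosetpre //.
- by rewrite -(quotientGK nsKG) cosetpre_normal.
- move=> U V chVU sKV sUZ; have /chief_factorP[nsUG _ pVU _] := chVU.
  rewrite (hf.2 _ _ _ _ _ chVU nsKG sKV); apply: hypN; rewrite ?sub1G //.
    exact: chief_factor_quotient.
  by rewrite /= sub_quotient_pre // (subset_trans (normal_sub nsUG)) ?normal_norm.
move=> M nsMG sKM hypM; rewrite -(quotientGK (nsK _ nsMG sKM)) cosetpreSK -eZf.
apply: Zf_max (quotient_normal K nsMG) _ => U V chVU _ sUM.
rewrite chief_factor_cosetpre // in chVU.
have := hypM _ _ chVU (sub_cosetpre _).
rewrite (hf.2 _ _ _ _ _ chVU nsKG (sub_cosetpre _)) !cosetpreK; apply.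
by rewrite -(quotientGK (nsK _ nsMG sKM)) cosetpreSK.
Qed.

End RelativeHypercentre.

Section SolubleResidual.
Variable gT : finGroupType.
Implicit Types X A N : {group gT}.

Lemma sol_residual_eq X A :
  A <| X -> A^`(1) = A -> solvable (X / A) -> sol_residual X = A.
Proof.
move=> nsAX perfA solXA; apply/eqP; rewrite eqEsubset (bigcap_inf A) ?nsAX //=.
apply/bigcapsP=> N /andP[nsNX solXN].
have nNA : A \subset 'N(N) := subset_trans (normal_sub nsAX) (normal_norm nsNX).
have /derivedP[n derAN1] := solvableS (quotientS N (normal_sub nsAX)) solXN.
have perfAn : A^`(n) = A.
  by elim: n {derAN1} => // n IHn; rewrite dergSn IHn -derg1 perfA.
by rewrite -quotient_sub1 // -derAN1 -quotient_der // perfAn.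
Qed.

Lemma der_fixpoint_exists X : exists n, X^`(n.+1) = X^`(n).
Proof.
have bound k : (exists n, X^`(n.+1) = X^`(n)) \/ #|X^`(k)| + k <= #|X|.
  elim: k => [|k [exfix | IHk]]; [by right; rewrite addn0 | by left |].
  have [fixk | nfixk] := eqVneq (X^`(k.+1) : {set gT}) X^`(k); first by left; exists k.
  right; rewrite addnS (leq_trans _ IHk) // ltn_add2r proper_card //.
  by rewrite properEneq nfixk der_subS.
have [// |] := bound #|X|.
by rewrite leqNgt -{1}[#|X|]add0n ltn_add2r cardG_gt0.
Qed.

Lemma sol_residual_der X : exists n, sol_residual X = X^`(n) /\ X^`(n.+1) = X^`(n).
Proof.
have [n fixn] := der_fixpoint_exists X; exists n; split=> //.
apply: sol_residual_eq; first exact: der_normal.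
  by rewrite derg1 -dergSn.
by apply/derivedP; exists n; rewrite -quotient_der ?der_norm // trivg_quotient.
Qed.

End SolubleResidual.

Section CentralizerResidual.
Variables (gT : finGroupType) (G H T W : {group gT}).
Hypotheses (chTH : chief_factor G T H) (nsWG : W <| G) (sWT : W \subset T).

Let nsHG : H <| G. Proof. by case/chief_factorP: chTH. Qed.
Let nsTG : T <| G. Proof. by case/chief_factorP: chTH. Qed.
Let pTH : T \proper H. Proof. by case/chief_factorP: chTH. Qed.
Let sTH : T \subset H. Proof. exact: proper_sub pTH. Qed.
Let nWH : H \subset 'N(W).
Proof. exact: subset_trans (normal_sub nsHG) (normal_norm nsWG). Qed.

Let abelian_cent_meet : abelian (T / W :&: 'C_(H / W)(T / W)).
Proof. by apply: abelianS (center_abelian (T / W)); rewrite setIS ?subsetIr. Qed.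

Lemma cent_quotient_normal : 'C_(H / W)(T / W) <| G / W.
Proof.
apply/andP; split.
  by rewrite (subset_trans (subsetIl _ _)) ?quotientS ?normal_sub.
by rewrite normsI ?norms_cent ?quotient_norms ?normal_norm.
Qed.

Lemma sol_residual_cent_supplement (N : {group gT}) : ~~ abelian (H / T) ->
  N <| G -> N * T = H -> N :&: T = W ->
  sol_residual 'C_(H / W)(T / W) = N / W.
Proof.
move=> nabHT nsNG defH eNT.
have sNH : N \subset H by rewrite -defH mulG_subl.
have nsNH : N <| H := normalS sNH (normal_sub nsHG) nsNG.
have chWN : chief_factor G W N.
  by rewrite -eNT; apply/(chief_factor_diamond nsNG nsTG defH).
have isoNH : N / W \isog H / T.
  have [phi [isophi _]] := G_iso_diamond nsNG nsTG defH.
  by rewrite -eNT; apply: isom_isog isophi.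
have perfNW : (N / W)^`(1) = N / W.
  by apply: chief_factor_perfect chWN _; rewrite (isog_abelian isoNH).
have sNTW : [~: N, T] \subset W.
  rewrite -eNT commg_subI // subsetI subxx.
    exact: subset_trans (normal_sub nsNG) (normal_norm nsTG).
  exact: subset_trans (normal_sub nsTG) (normal_norm nsNG).
have sNWC : N / W \subset 'C_(H / W)(T / W).
  by rewrite subsetI quotientS // quotient_cents2r.
have defC : N / W * (T / W :&: 'C_(H / W)(T / W)) = 'C_(H / W)(T / W).
  rewrite group_modl // -quotientMl ?(subset_trans sNH) // defH.
  exact/setIidPr/subsetIl.
apply: (sol_residual_eq (X := 'C_(H / W)(T / W)%G) (A := (N / W)%G)) => //=.
  exact: normalS sNWC (subsetIl _ _) (quotient_normal W nsNH).
by rewrite abelian_sol //= -defC quotientMidl quotient_abelian.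
Qed.

Local Notation C := (coset W @*^-1 sol_residual 'C_(H / W)(T / W)).

Lemma cosetpre_sol_residual_cent_normal : C <| G.
Proof.
have [n [-> _]] := sol_residual_der ('C_(H / W)(T / W))%G.
rewrite -(quotientGK nsWG) cosetpre_normal.
exact: char_normal_trans (der_char n _) cent_quotient_normal.
Qed.

Lemma sol_residual_cent_card_supplement :
  #|C / W| = #|H / T| -> C * T = H /\ C :&: T = W.
Proof.
have [n [eR perfR]] := sol_residual_der ('C_(H / W)(T / W))%G.
pose R := ('C_(H / W)(T / W)^`(n))%G; rewrite (eR : _ = gval R) => cardC.
have sRH : R \subset H / W by rewrite (subset_trans (der_sub n _)) ?subsetIl.
have nsCG : (coset W @*^-1 R)%G <| G.
  by rewrite /= -eR cosetpre_sol_residual_cent_normal.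
have nsWH : W <| H := normalS (subset_trans sWT sTH) (normal_sub nsHG) nsWG.
have sCH : coset W @*^-1 R \subset H by rewrite sub_cosetpre_quo.
have sWC : W \subset coset W @*^-1 R := sub_cosetpre R.
have nTH : H \subset 'N(T) := subset_trans (normal_sub nsHG) (normal_norm nsTG).
have ntHT : 1 < #|H / T| by rewrite card_quotient // indexg_gt1; case/andP: pTH.
have perfR' : R^`(1) = R by rewrite derg1 -dergSn.
have defCT : coset W @*^-1 R * T = H.
  (* C <= T would put the perfect group R inside an abelian group *)
  rewrite -(normal_joinE nsCG nsTG).
  have sCTH : coset W @*^-1 R <*> T \subset H by rewrite join_subG sCH sTH.
  have [eCT | //] :=
    chief_factor_between chTH (normalY nsCG nsTG) (joing_subr _ _) sCTH.
  have sRT : R \subset T / W.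
    by rewrite -(cosetpreK R) quotientS // -eCT joing_subl.
  have /derG1P R1 : abelian R.
    by apply: abelianS abelian_cent_meet; rewrite subsetI sRT der_sub.
  by move: ntHT; rewrite -cardC cosetpreK -perfR' R1 cards1.
split=> //; apply/eqP; rewrite eq_sym eqEcard subsetI sWC sWT !andTb.
have iCW : #|coset W @*^-1 R : W| = #|coset W @*^-1 R : coset W @*^-1 R :&: T|.
  rewrite -card_quotient ?(subset_trans sCH nWH) // cardC card_quotient // -defCT.
  by rewrite -normC ?indexMg ?indexgI // (subset_trans (normal_sub nsTG)) ?normal_norm.
rewrite -(leq_pmul2r (indexg_gt0 (coset W @*^-1 R)%G W)) (Lagrange sWC) {1}iCW.
by rewrite Lagrange ?subsetIl.
Qed.

End CentralizerResidual.

Section MeetWithHypercentre.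
Variables (f : cf_fun) (gT : finGroupType).
Arguments f : clear implicits.
Hypothesis hf : is_chief_factor_function f.
Variables (G H T K Z : {group gT}).
Hypotheses (chTH : chief_factor G T H) (sKT : K \subset T).
Hypotheses (nsZG : Z <| G) (sKZ : K \subset Z) (hypZ : f_hypercentral f G K Z).
Hypothesis maxZ : forall N : {group gT},
  N <| G -> K \subset N -> f_hypercentral f G K N -> N \subset Z.

Let nsHG : H <| G. Proof. by case/chief_factorP: chTH. Qed.
Let nsTG : T <| G. Proof. by case/chief_factorP: chTH. Qed.
Let sTH : T \subset H. Proof. by case/chief_factorP: chTH => _ _ /proper_sub. Qed.
Let nsZHG : (Z :&: H)%G <| G. Proof. exact: normalI. Qed.
Let nsZTG : (Z :&: T)%G <| G. Proof. exact: normalI. Qed.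

Lemma Zf_meet_dichotomy : Z :&: H = Z :&: T \/ (Z :&: H) * T = H.
Proof.
have sZHTH : (Z :&: H) <*> T \subset H by rewrite join_subG subsetIr sTH.
have [eZHT | eZHT] :=
  chief_factor_between chTH (normalY nsZHG nsTG) (joing_subr _ _) sZHTH.
  left; apply/eqP; rewrite eqEsubset (setIS Z sTH) andbT subsetI subsetIl /=.
  by rewrite (subset_trans (joing_subl (Z :&: H) T)) ?eZHT.
by right; rewrite -(normal_joinE nsZHG nsTG).
Qed.

Lemma Zf_meet_supplement : (Z :&: H) * T = H ->
  [/\ chief_factor G (Z :&: T) (Z :&: H), Z :&: H :&: T = Z :&: T & f gT G H T].
Proof.
move=> defH; have eI : Z :&: H :&: T = Z :&: T by rewrite -setIA (setIidPr sTH).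
have chZ : chief_factor G (Z :&: T) (Z :&: H).
  by rewrite -eI; apply/(chief_factor_diamond nsZHG nsTG defH).
split=> //; rewrite -(f_diamond hf nsZHG nsTG defH chTH) eI.
by apply: hypZ chZ _ (subsetIl _ _); rewrite subsetI sKZ sKT.
Qed.

Lemma Zf_meet_eq_of_f_false : f gT G H T = false -> Z :&: H = Z :&: T.
Proof. by case: Zf_meet_dichotomy => // /Zf_meet_supplement[_ _ ->]. Qed.

Lemma Zf_meet_neq_residual : ~~ abelian (H / T) -> Z :&: H != Z :&: T ->
  coset (Z :&: T) @*^-1 sol_residual 'C_(H / (Z :&: T))(T / (Z :&: T)) = Z :&: H.
Proof.
move=> nabHT neqZ; have [eqZ | defH] := Zf_meet_dichotomy.
  by rewrite eqZ eqxx in neqZ.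
have [_ eI _] := Zf_meet_supplement defH.
rewrite (sol_residual_cent_supplement chTH nsZTG nabHT nsZHG defH eI).
by rewrite quotientGK // (normalS _ (normal_sub nsZHG) nsZTG) ?setIS.
Qed.

Lemma Zf_meet_neq_card : Z :&: H != Z :&: T ->
  #|(Z :&: H) / (Z :&: T)| = #|H / T|.
Proof.
move=> neqZ; have [eqZ | defH] := Zf_meet_dichotomy.
  by rewrite eqZ eqxx in neqZ.
have [_ eI _] := Zf_meet_supplement defH.
have [phi [isophi _]] := G_iso_diamond nsZHG nsTG defH.
by apply: card_isog; rewrite -eI; apply: isom_isog isophi.
Qed.

Lemma Zf_meet_no_supplement (C : {group gT}) : f gT G H T ->
  Z :&: H = Z :&: T -> C <| G -> C * T = H -> C :&: T <> Z :&: T.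
Proof.
move=> fHT eqZ nsCG defH eCT.
have chWC : chief_factor G (Z :&: T) C.
  by rewrite -eCT; apply/(chief_factor_diamond nsCG nsTG defH).
have fCW : f gT G C (Z :&: T) by rewrite -eCT (f_diamond hf nsCG nsTG defH chTH).
have sKW : K \subset Z :&: T by rewrite subsetI sKZ sKT.
have hypW : f_hypercentral f G K (Z :&: T).
  by move=> U V chVU sKV sUW; apply: hypZ chVU sKV (subset_trans sUW (subsetIl _ _)).
have /chief_factorP[_ _ pWC _] := chWC.
have sCZ : C \subset Z.
  apply: maxZ nsCG (subset_trans sKW (proper_sub pWC)) _.
  by apply: (f_hypercentral_chief_ext hf chWC fCW sKW); apply: hypW.
have sCH : C \subset H by rewrite -defH mulG_subl.
by move: pWC; rewrite /= -eqZ properE subsetI sCZ sCH andbF.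
Qed.

Lemma Zf_meet_neq_of_card : f gT G H T ->
  #|coset (Z :&: T) @*^-1 sol_residual 'C_(H / (Z :&: T))(T / (Z :&: T))
      / (Z :&: T)| = #|H / T| ->
  Z :&: H != Z :&: T.
Proof.
move=> fHT cardC; apply/eqP=> eqZ.
have [defCT eCT] := sol_residual_cent_card_supplement chTH nsZTG (subsetIr _ _) cardC.
have nsCG := cosetpre_sol_residual_cent_normal chTH nsZTG.
exact: Zf_meet_no_supplement fHT eqZ nsCG defCT eCT.
Qed.

End MeetWithHypercentre.

Unset Implicit Arguments.

Theorem mainTheorem4 (f : cf_fun) (hf : is_chief_factor_function f)
    (gT : finGroupType) (G K H T : {group gT})
    (nKG : K <| G) (chHT : chief_factor G T H) (nab : ~~ abelian (H / T))
    (sKT : K \subset T) :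
  let Z1 := coset K @*^-1 (Zf f (G / K) :&: (T / K)) in
  let Z2 := coset K @*^-1 (Zf f (G / K) :&: (H / K)) in
  let C := coset Z1 @*^-1 (sol_residual 'C_(H / Z1)(T / Z1)) in
  (f gT G H T = false -> Z2 = Z1) /\
  (f gT G H T = true ->
     (Z2 != Z1 <-> #|C / Z1| = #|H / T|) /\ (Z2 != Z1 -> Z2 = C)).
Proof.
have [Z [eZ nsZG sKZ hypZ maxZ]] := cosetpre_Zf_greatest hf nKG.
have /chief_factorP[nsHG nsTG pTH _] := chHT.
have nsKT : K <| T := normalS sKT (normal_sub nsTG) nKG.
have nsKH : K <| H := normalS (subset_trans sKT (proper_sub pTH)) (normal_sub nsHG) nKG.
have eZ1 : coset K @*^-1 (Zf f (G / K) :&: (T / K)) = Z :&: T.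
  by rewrite morphpreI eZ quotientGK.
have eZ2 : coset K @*^-1 (Zf f (G / K) :&: (H / K)) = Z :&: H.
  by rewrite morphpreI eZ quotientGK.
have residualE := Zf_meet_neq_residual hf chHT sKT nsZG sKZ hypZ nab.
have cardE := Zf_meet_neq_card hf chHT sKT nsZG sKZ hypZ.
move=> Z1 Z2 C; rewrite {}/C {}/Z2 {}/Z1 eZ1 eZ2.
split=> [|fHT]; first exact: (Zf_meet_eq_of_f_false hf chHT sKT nsZG sKZ hypZ).
split=> [|neqZ]; last by rewrite residualE.
split=> [neqZ | cardC]; first by rewrite residualE // cardE.
exact: (Zf_meet_neq_of_card hf chHT sKT nsZG sKZ hypZ maxZ fHT cardC).
Qed.
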